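(* Let $n$ be a positive integer and let $\mathcal M_{n^2}$ be the set of integer matrices of determinant $n^2$ whose entries have greatest common divisor $1$. A complete set of representatives of the $\mathrm{SL}(2,\mathbb Z)$-conjugacy classes of hyperbolic elements of $\mathcal M_{n^2}$ whose fixed points are cusps is $$\left\{\pm\begin{pmatrix}a&b+ma\\0&d\end{pmatrix}:\ b=1,\dots,h,\ \gcd(b,h)=1,\ m=1,\dots,(d-a)/h,\ \text{where }h=\gcd(a,d)\right\},$$ where $a$ and $d$ run over all integers satisfying $ad=n^2$ and $0<a<d$.
   Context: An element is hyperbolic if its fixed points in $\mathbb P^1(\mathbb C)$ are two distinct real numbers; ''fixed points are cusps'' means both fixed points lie in $\mathbb P^1(\mathbb Q)$. Two such elements are equivalent if they are conjugate by an element of $\mathrm{SL}(2,\mathbb Z)$. *)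

From HB Require Import structures.
From mathcomp Require Import all_boot all_order all_algebra all_field.
Set Implicit Arguments. Unset Strict Implicit. Unset Printing Implicit Defensive.
Import Order.TTheory GRing.Theory Num.Theory.
Local Open Scope ring_scope.

Definition mx2 {R : nzRingType} (a b c d : R) : 'M[R]_2 :=
  \matrix_(i < 2, j < 2)
    nth 0 (nth [::] [:: [:: a; b]; [:: c; d]] i) j.

(* The matrix M of Z acting on P^1(C) (C = algC, the algebraic complex
   numbers; fixed points of integer matrices are algebraic). A point of
   P^1 is a nonzero column vector up to nonzero scalars. *)
Definition Cmx (M : 'M[int]_2) : 'M[algC]_2 := map_mx intr M.

Definition fixed_pt (M : 'M[int]_2) (v : 'cV[algC]_2) : Prop :=
  v != 0 /\ exists lam : algC, Cmx M *m v = lam *: v.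

Definition proj_eq (v w : 'cV[algC]_2) : Prop :=
  exists c : algC, c != 0 /\ w = c *: v.

(* the projective point [v] lies in P^1(S) for the subset S of C *)
Definition pt_in (S : pred algC) (v : 'cV[algC]_2) : Prop :=
  exists c : algC, c != 0 /\ forall i, (c *: v) i 0 \in S.

Definition hyperbolic (M : 'M[int]_2) : Prop :=
  exists v w, fixed_pt M v /\ fixed_pt M w /\ ~ proj_eq v w /\
    pt_in [pred x | x \is Num.real] v /\ pt_in [pred x | x \is Num.real] w /\
    (forall u, fixed_pt M u -> proj_eq v u \/ proj_eq w u).

Definition cusp_fixed (M : 'M[int]_2) : Prop :=
  forall u, fixed_pt M u -> pt_in [pred x | x \in Crat] u.

Definition inM (n : nat) (M : 'M[int]_2) : Prop :=
  \det M = (n%:Z) ^+ 2 /\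
  gcdz (gcdz (M 0 0) (M 0 1)) (gcdz (M 1 0) (M 1 1)) = 1.

Definition sl2_conj (M N : 'M[int]_2) : Prop :=
  exists g : 'M[int]_2, \det g = 1 /\ N = invmx g *m M *m g.

Definition is_rep (n : nat) (R : 'M[int]_2) : Prop :=
  exists (a d b m s : int),
    [/\ 0 < a, a < d, a * d = (n%:Z) ^+ 2, s = 1 \/ s = -1 &
    let h := gcdz a d in
    [/\ 1 <= b <= h, gcdz b h = 1, 1 <= m <= ((d - a) %/ h)%Z &
        R = s *: mx2 a (b + m * a) 0 d]].

From HB Require Import structures.
From mathcomp Require Import all_boot all_order all_algebra all_field.
From mathcomp Require Import ring zify.
Set Implicit Arguments. Unset Strict Implicit. Unset Printing Implicit Defensive.
Import Order.TTheory GRing.Theory Num.Theory.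
Local Open Scope ring_scope.

(* A fixed point in P^1(Q) rescales to a primitive integral eigenvector, and
   completing it to a basis of Z^2 conjugates M in SL(2,Z) to an upper triangular
   matrix whose top-left entry is the corresponding eigenvalue.  Doing this for
   both fixed points gives two triangular forms with swapped diagonals, so up to
   the sign of M one of them is [[a, y], [0, d]] with 0 < a < d and a d = n^2.
   Conjugating by [[1, t], [0, 1]] changes y by t (d - a), and the numbers b + m a
   in the statement form a complete residue system modulo d - a; coprimality of
   the entries is exactly gcd(b, gcd(a, d)) = 1.  Conversely an SL(2,Z)-conjugacy
   between two representatives preserves the trace, which forces the conjugating
   matrix to be upper triangular, hence to fix a, d and y modulo d - a. *)

Lemma ord2P (i : 'I_2) : i = 0 \/ i = 1.
Proof. by case: i => [[|[|//]]] Hi; [left|right]; apply: val_inj. Qed.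

Section TwoByTwo.
Variable R : nzRingType.
Implicit Types (a b c d x y s : R).

Lemma mx2_eta (A : 'M[R]_2) : A = mx2 (A 0 0) (A 0 1) (A 1 0) (A 1 1).
Proof.
apply/matrixP => i j; rewrite /mx2 mxE.
by case: (ord2P i) => ->; case: (ord2P j) => ->.
Qed.

Lemma mx2_inj a b c d a' b' c' d' :
  mx2 a b c d = mx2 a' b' c' d' -> [/\ a = a', b = b', c = c' & d = d'].
Proof.
move=> /matrixP e; have := e 0 0; have := e 0 1; have := e 1 0; have := e 1 1.
by rewrite !mxE /= => -> -> -> ->.
Qed.

Lemma mul_mx2 a b c d a' b' c' d' :
  mx2 a b c d *m mx2 a' b' c' d' =
  mx2 (a * a' + b * c') (a * b' + b * d') (c * a' + d * c') (c * b' + d * d').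
Proof.
apply/matrixP => i j; rewrite !mxE big_ord_recl big_ord1 /mx2 !mxE.
by case: (ord2P i) => ->; case: (ord2P j) => ->.
Qed.

Lemma scale_mx2 s a b c d : s *: mx2 a b c d = mx2 (s * a) (s * b) (s * c) (s * d).
Proof.
apply/matrixP => i j; rewrite !mxE.
by case: (ord2P i) => ->; case: (ord2P j) => ->.
Qed.

Lemma tr_mx2 a b c d : \tr (mx2 a b c d) = a + d.
Proof. by rewrite /mxtrace big_ord_recl big_ord1 /mx2 !mxE. Qed.

Definition cv2 x y : 'cV[R]_2 := \col_(i < 2) nth 0 [:: x; y] i.

Lemma cv2_eta (v : 'cV[R]_2) : v = cv2 (v 0 0) (v 1 0).
Proof.
apply/matrixP => i j; rewrite /cv2 mxE (ord1 j).
by case: (ord2P i) => ->.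
Qed.

Lemma cv2_inj x y x' y' : cv2 x y = cv2 x' y' -> x = x' /\ y = y'.
Proof. by move=> /matrixP e; have := e 0 0; have := e 1 0; rewrite !mxE /= => -> ->. Qed.

Lemma cv2_eq0 x y : (cv2 x y == 0) = (x == 0) && (y == 0).
Proof.
apply/eqP/andP => [e|[/eqP -> /eqP ->]].
  by have := cv2_inj (etrans e (cv2_eta 0)); rewrite !mxE => -[-> ->].
by apply/matrixP => i j; rewrite !mxE; case: (ord2P i) => ->.
Qed.

Lemma mul_mx2_cv2 a b c d x y :
  mx2 a b c d *m cv2 x y = cv2 (a * x + b * y) (c * x + d * y).
Proof.
apply/matrixP => i j; rewrite !mxE big_ord_recl big_ord1 /mx2 !mxE.
by case: (ord2P i) => ->.
Qed.

Lemma scale_cv2 s x y : s *: cv2 x y = cv2 (s * x) (s * y).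
Proof. by apply/matrixP => i j; rewrite !mxE; case: (ord2P i) => ->. Qed.

End TwoByTwo.

Lemma det_mx2 (R : comNzRingType) (a b c d : R) : \det (mx2 a b c d) = a * d - b * c.
Proof.
rewrite (expand_det_row _ 0) big_ord_recl big_ord1 /cofactor !det_mx11 /mx2 !mxE /=.
by rewrite expr0 expr1; ring.
Qed.

Lemma mx2_upper_shift (R : comNzRingType) (a x d t : R) :
  mx2 a (x + t * (d - a)) 0 d *m mx2 1 t 0 1 = mx2 1 t 0 1 *m mx2 a x 0 d.
Proof. by rewrite !mul_mx2; congr mx2; ring. Qed.

Lemma Cmx_mx2 (a b c d : int) : Cmx (mx2 a b c d) = mx2 a%:~R b%:~R c%:~R d%:~R.
Proof. by apply/matrixP => i j; rewrite !mxE; case: (ord2P i) => ->; case: (ord2P j) => ->. Qed.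

Lemma sign_cases (s t : int) : s * t = 1 -> s = 1 \/ s = -1.
Proof. by rewrite mulrC => /intUnitRing.unitzPl /orP[] /eqP; [left|right]. Qed.

Lemma dvdz_small (h z : int) : (h %| z)%Z -> `|z| < h -> z = 0.
Proof.
move=> /dvdzP[c ->] lt_zh; apply/eqP; rewrite mulf_eq0; apply/orP; left.
have h_gt0 : 0 < h by apply: le_lt_trans lt_zh.
rewrite normrM (gtr0_norm h_gt0) -{2}[h]mul1r ltr_pM2r // in lt_zh.
by rewrite -normr_eq0; lia.
Qed.

Lemma gcdz_eq1P (m n : int) :
  gcdz m n = 1 <-> forall k, (k %| m)%Z -> (k %| n)%Z -> (k %| 1)%Z.
Proof.
split=> [mn1 k km kn|dvd1].
  have : (k %| gcdz m n)%Z by rewrite dvdz_gcd km kn.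
  by rewrite mn1.
have := dvd1 _ (dvdz_gcdl m n) (dvdz_gcdr m n).
by rewrite dvdz1 /gcdz absz_nat => /eqP ->.
Qed.

Definition content (M : 'M[int]_2) : int :=
  gcdz (gcdz (M 0 0) (M 0 1)) (gcdz (M 1 0) (M 1 1)).

Lemma dvdz_contentP (k : int) (M : 'M[int]_2) :
  reflect (forall i j, (k %| M i j)%Z) (k %| content M)%Z.
Proof.
rewrite !dvdz_gcd -andbA; apply: (iffP and4P) => [[? ? ? ?] i j|dvdM].
  by case: (ord2P i) => ->; case: (ord2P j) => ->.
by split; apply: dvdM.
Qed.

Lemma content_eq1P (M : 'M[int]_2) :
  content M = 1 <-> forall k, (forall i j, (k %| M i j)%Z) -> (k %| 1)%Z.
Proof.
split=> [c1 k /dvdz_contentP|dvd1]; first by rewrite c1.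
have := dvd1 _ (elimT (dvdz_contentP _ M) (dvdzz _)).
by rewrite dvdz1 /content /gcdz absz_nat => /eqP ->.
Qed.

Lemma content_upper_eq1 (s a b m d : int) : s * s = 1 ->
  content (s *: mx2 a (b + m * a) 0 d) = 1 <-> gcdz b (gcdz a d) = 1.
Proof.
move=> ss; have dvd_s k z : (k %| s * z)%Z = (k %| z)%Z.
  apply/idP/idP => [|kz]; last exact: dvdz_mull.
  by rewrite -{2}[z]mul1r -ss -mulrA; apply: dvdz_mull.
rewrite content_eq1P gcdz_eq1P; split=> dvd1 k.
  rewrite dvdz_gcd => kb /andP[ka kd]; apply: dvd1 => i j.
  rewrite scale_mx2 mxE; case: (ord2P i) => ->; case: (ord2P j) => -> /=;
    by rewrite ?mulr0 ?dvdz0 ?dvd_s ?rpredD ?dvdz_mull.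
move=> dvdR; have := dvdR 0 0; have := dvdR 0 1; have := dvdR 1 1.
rewrite scale_mx2 !mxE /= !dvd_s => kd kx ka; apply: dvd1.
  by rewrite -(addrK (m * a) b) rpredB ?dvdz_mull.
by rewrite dvdz_gcd ka kd.
Qed.

Lemma det1_unitmx (R : comUnitRingType) n (g : 'M[R]_n) : \det g = 1 -> g \in unitmx.
Proof. by rewrite unitmxE => ->; apply: unitr1. Qed.

Section SL2Conjugacy.
Variables (M N g : 'M[int]_2).
Hypotheses (det_g : \det g = 1) (conj_g : M *m g = g *m N).

Let unit_g : g \in unitmx := det1_unitmx det_g.

Lemma sl2_conj_tr : \tr M = \tr N.
Proof.
have -> : M = g *m (N *m invmx g) by rewrite mulmxA -conj_g mulmxK.
by rewrite mxtrace_mulC -mulmxA mulVmx // mulmx1.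
Qed.

Lemma sl2_conj_det : \det M = \det N.
Proof. by have := congr1 determinant conj_g; rewrite !det_mulmx det_g mulr1 mul1r. Qed.

Lemma sl2_conj_dvdz (k : int) : (forall i j, (k %| N i j)%Z) -> forall i j, (k %| M i j)%Z.
Proof.
move=> dvdN; pose N' := \matrix_(i, j) (N i j %/ k)%Z.
have -> : M = k *: (g *m N' *m invmx g).
  rewrite scalemxAl scalemxAr (_ : k *: N' = N) -?conj_g ?mulmxK //.
  by apply/matrixP => i j; rewrite !mxE mulrC divzK.
by move=> i j; rewrite mxE dvdz_mulr.
Qed.

Lemma sl2_conj_content1 : content M = 1 -> content N = 1.
Proof.
move=> /content_eq1P dvd1; apply/content_eq1P => k dvdN.
exact/dvd1/sl2_conj_dvdz.
Qed.

End SL2Conjugacy.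

Lemma sl2_conjP (M N : 'M[int]_2) :
  sl2_conj M N <-> exists2 g, \det g = 1 & M *m g = g *m N.
Proof.
split=> [[g [dg ->]]|[g dg e]]; exists g => //.
  by rewrite !mulmxA mulmxV ?det1_unitmx // mul1mx.
by split; rewrite // -mulmxA e mulKmx ?det1_unitmx.
Qed.

Lemma proj_eq_refl (v : 'cV[algC]_2) : proj_eq v v.
Proof. by exists 1; rewrite oner_eq0 scale1r. Qed.

Lemma pt_in_proj (S : pred algC) (x y : algC) (u : 'cV_2) :
  x \in S -> y \in S -> proj_eq (cv2 x y) u -> pt_in S u.
Proof.
move=> Sx Sy [c [c0 ->]]; exists c^-1; split; first by rewrite invr_eq0.
by move=> i; rewrite scalerA mulVf // scale1r mxE; case: (ord2P i) => ->.
Qed.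

Lemma upper_eigenvector (al be de lam : algC) (u : 'cV_2) :
  al != de -> u != 0 -> mx2 al be 0 de *m u = lam *: u ->
  proj_eq (cv2 1 0) u \/ proj_eq (cv2 be (de - al)) u.
Proof.
move=> al_de; rewrite (cv2_eta u); set x := u 0 0; set y := u 1 0.
rewrite cv2_eq0 mul_mx2_cv2 scale_cv2 => u0 /cv2_inj[e1 e2].
have de_al : de - al != 0 by rewrite subr_eq0 eq_sym.
have [y0|y0] := eqVneq y 0.
  left; exists x; rewrite scale_cv2 y0 mulr1 mulr0; split=> //.
  by move: u0; rewrite y0 eqxx andbT.
right; exists (y / (de - al)); rewrite scale_cv2 divfK // mulf_neq0 ?invr_eq0 //.
split=> //; congr cv2.
have lam_de : lam = de by apply: (mulIf y0); rewrite -e2 mul0r add0r.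
apply: (mulIf de_al); rewrite mulrAC divfK //.
by rewrite mulrBr (mulrC x) -lam_de -e1; ring.
Qed.

Lemma upper_hyperbolic_cusp (a x d : int) :
  a != d -> hyperbolic (mx2 a x 0 d) /\ cusp_fixed (mx2 a x 0 d).
Proof.
move=> a_d; rewrite /hyperbolic /cusp_fixed /fixed_pt Cmx_mx2 (_ : 0%:~R = 0) //.
set al : algC := a%:~R; set be : algC := x%:~R; set de : algC := d%:~R.
have al_de : al != de by rewrite eqr_int.
have de_al : de - al != 0 by rewrite subr_eq0 eq_sym.
have fixed_cases u : (u != 0 /\ exists lam, mx2 al be 0 de *m u = lam *: u) ->
    proj_eq (cv2 1 0) u \/ proj_eq (cv2 be (de - al)) u.
  by move=> [u0 [lam eu]]; apply: upper_eigenvector eu.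
have real_diff : de - al \is Num.real by rewrite -rmorphB realz.
have rat_diff : de - al \in Crat by rewrite -rmorphB rpred_int.
split; last first.
  by move=> u /fixed_cases[] /pt_in_proj; apply; rewrite inE ?rpred0 ?rpred1 ?rpred_int.
exists (cv2 1 0), (cv2 be (de - al)).
split; [split|split; [split|split; [|split; [|split]]]].
- by rewrite cv2_eq0 oner_eq0.
- by exists al; rewrite mul_mx2_cv2 scale_cv2; congr cv2; ring.
- by rewrite cv2_eq0 negb_and de_al orbT.
- by exists de; rewrite mul_mx2_cv2 scale_cv2; congr cv2; ring.
- case=> c [_]; rewrite scale_cv2 => /cv2_inj[_].
  by rewrite mulr0 => /eqP; rewrite (negbTE de_al).
- by apply: pt_in_proj (proj_eq_refl _); rewrite inE ?real0 ?real1.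
- by apply: pt_in_proj (proj_eq_refl _); rewrite inE ?realz.
- by move=> u /fixed_cases.
Qed.

Lemma Crat_primitive_multiple (x y : algC) :
  x \in Crat -> y \in Crat -> (x != 0) || (y != 0) ->
  exists (p r e f : int) (k : algC),
    [/\ k != 0, k * x = p%:~R, k * y = r%:~R & e * p + f * r = 1].
Proof.
move=> /CratP[qx ->] /CratP[qy ->] xy0.
have den_num q : ratr q * (denq q)%:~R = (numq q)%:~R :> algC.
  by rewrite -[RHS]ratr_int numqE rmorphM /= ratr_int.
set P := numq qx * denq qy; set Q := numq qy * denq qx.
set k : algC := (denq qx * denq qy)%:~R.
have k0 : k != 0 by rewrite intr_eq0 mulf_neq0 ?denq_neq0.
have kx : k * ratr qx = P%:~R by rewrite /k /P !rmorphM /= -den_num; ring.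
have ky : k * ratr qy = Q%:~R by rewrite /k /Q !rmorphM /= -den_num; ring.
have PQ0 : (P != 0) || (Q != 0).
  by move: xy0; rewrite -!(intr_eq0 algC) -kx -ky !mulf_eq0 (negbTE k0).
set G := gcdz P Q.
have G0 : G != 0 by rewrite gcdz_eq0 negb_and.
have GC0 : G%:~R != 0 :> algC by rewrite intr_eq0.
have PG := divzK (dvdz_gcdl P Q); have QG := divzK (dvdz_gcdr P Q).
have [u [v uv]] := Bezoutz P Q.
exists (P %/ G)%Z, (Q %/ G)%Z, u, v, (k / G%:~R); split.
- by rewrite mulf_neq0 ?invr_eq0.
- by rewrite mulrAC kx -{1}PG rmorphM /= mulfK.
- by rewrite mulrAC ky -{1}QG rmorphM /= mulfK.
- have uvG : u * ((P %/ G)%Z * G) + v * ((Q %/ G)%Z * G) = G by rewrite PG QG.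
  by apply: (mulIf G0); rewrite mul1r -[X in _ = X]uvG; ring.
Qed.

(* An eigenvector in P^1(Q) rescales to a primitive integral vector (p, r); completing
   it by (-f, e) with e p + f r = 1 gives a basis of Z^2 in which M is upper triangular. *)
Lemma rational_eigenvector_triangularize (M : 'M[int]_2) (v : 'cV[algC]_2) (al : algC) :
  pt_in [pred x | x \in Crat] v -> v != 0 -> Cmx M *m v = al *: v ->
  exists g L y mu, [/\ \det g = 1, M *m g = g *m mx2 L y 0 mu & al = L%:~R].
Proof.
move=> [c [c0 rat_cv]] v0 Mv.
have xy0 : ((c *: v) 0 0 != 0) || ((c *: v) 1 0 != 0).
  rewrite -negb_and -cv2_eq0 -cv2_eta scaler_eq0 negb_or c0.
  exact: v0.
have [p [r [e [f [k [k0 kx ky per]]]]]] := Crat_primitive_multiple (rat_cv 0) (rat_cv 1) xy0.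
have Mpr : Cmx M *m cv2 p%:~R r%:~R = al *: cv2 p%:~R r%:~R.
  rewrite -kx -ky -scale_cv2 -cv2_eta scalerA -scalemxAr Mv.
  by rewrite !scalerA mulrC.
move: Mpr; rewrite (mx2_eta M) Cmx_mx2 mul_mx2_cv2 scale_cv2 => /cv2_inj[e1 e2].
set m00 := M 0 0 in e1 *; set m01 := M 0 1 in e1 *.
set m10 := M 1 0 in e2 *; set m11 := M 1 1 in e2 *.
set L := e * (m00 * p + m01 * r) + f * (m10 * p + m11 * r).
have alL : al = L%:~R.
  rewrite !rmorphD !rmorphM /= !rmorphD !rmorphM /= e1 e2.
  transitivity (al * (e * p + f * r)%:~R); first by rewrite per mulr1.
  by rewrite rmorphD !rmorphM /=; ring.
have col0 : m00 * p + m01 * r = L * p.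
  by apply: (@intr_inj algC); rewrite !rmorphD !rmorphM /= e1 alL.
have col1 : m10 * p + m11 * r = L * r.
  by apply: (@intr_inj algC); rewrite !rmorphD !rmorphM /= e2 alL.
set Y0 := - m00 * f + m01 * e; set Y1 := - m10 * f + m11 * e.
exists (mx2 p (- f) r e), L, (e * Y0 + f * Y1), (- r * Y0 + p * Y1).
split=> //; first by rewrite det_mx2 -per; ring.
rewrite !mul_mx2; congr mx2.
- by rewrite col0; ring.
- transitivity (Y0 * (e * p + f * r)); first by rewrite per mulr1 /Y0; ring.
  by ring.
- by rewrite col1; ring.
- transitivity (Y1 * (e * p + f * r)); first by rewrite per mulr1 /Y1; ring.
  by ring.
Qed.

Lemma hyperbolic_distinct_eigenvalues (M : 'M[int]_2) : hyperbolic M ->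
  exists (v w : 'cV[algC]_2) (al be : algC),
    [/\ v != 0, Cmx M *m v = al *: v, w != 0, Cmx M *m w = be *: w & al != be].
Proof.
move=> [v [w [[v0 [al Mv]] [[w0 [be Mw]] [not_vw [_ [_ fixed_vw]]]]]]].
exists v, w, al, be; split=> //; apply/eqP => al_be.
have vw0 : v + w != 0.
  apply/eqP => vw; apply: not_vw; exists (-1); rewrite oppr_eq0 oner_eq0 scaleN1r.
  by split=> //; apply/eqP; rewrite -addr_eq0 addrC vw.
have [] := fixed_vw (v + w) (conj vw0 (ex_intro _ al _)).
- by rewrite mulmxDr Mv Mw al_be scalerDr.
- move=> [c [_ vw_cv]]; have w_cv : w = (c - 1) *: v.
    by rewrite scalerBl scale1r -vw_cv addrC addKr.
  apply: not_vw; exists (c - 1); rewrite w_cv; split=> //.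
  by apply: contraNneq w0 => c1; rewrite w_cv c1 scale0r.
- move=> [c [_ vw_cw]]; have v_cw : v = (c - 1) *: w.
    by rewrite scalerBl scale1r -vw_cw addrK.
  have c1 : c - 1 != 0 by apply: contraNneq v0 => c1; rewrite v_cw c1 scale0r.
  apply: not_vw; exists (c - 1)^-1; rewrite invr_eq0 c1 v_cw scalerA mulVf //.
  by rewrite scale1r.
Qed.

Lemma triangular_diag_swap (R : idomainType) (a d a' d' : R) :
  a != a' -> a + d = a' + d' -> a * d = a' * d' -> d = a' /\ d' = a.
Proof.
move=> aa' tr det; have d'E : d' = a + d - a' by rewrite tr addrC addKr.
have : (a - a') * (d - a') = 0 by rewrite -[RHS](subrr (a * d)) {2}det d'E; ring.
move/eqP; rewrite mulf_eq0 subr_eq0 (negbTE aa') subr_eq0 => /eqP da'.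
by rewrite d'E da' addrK.
Qed.

Section NormalForm.
Variables a d : int.
Hypotheses (a_gt0 : 0 < a) (a_lt_d : a < d).
Let h := gcdz a d.
Let D := ((d - a) %/ h)%Z.

Lemma gcdz_cofactors : exists a1,
  [/\ 0 < h, 0 < D, a = a1 * h, d - a = D * h & exists u v, u * a1 + v * D = 1].
Proof.
have h_gt0 : 0 < h by rewrite lt_def gcdz_eq0 negb_and (gt_eqF a_gt0) /= /h /gcdz.
set a1 := (a %/ h)%Z; have ah : a = a1 * h by rewrite divzK ?dvdz_gcdl.
have Dh : d - a = D * h by rewrite /D divzK // rpredB ?dvdz_gcdr ?dvdz_gcdl.
exists a1; split=> //.
  by rewrite -(pmulr_lgt0 _ h_gt0) -Dh subr_gt0.
have [u [v uv]] := Bezoutz a d; exists (u + v), v.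
apply: (mulIf (lt0r_neq0 h_gt0)); rewrite mul1r.
transitivity ((u + v) * a + v * (d - a)); first by rewrite Dh {1}ah; ring.
by rewrite -[RHS]uv; ring.
Qed.

(* b is the residue modulo h, and then m is determined modulo (d - a)/h because
   a/h is invertible modulo (d - a)/h. *)
Lemma rep_residue_uniq (b1 b2 m1 m2 : int) :
  1 <= b1 <= h -> 1 <= b2 <= h -> 1 <= m1 <= D -> 1 <= m2 <= D ->
  (d - a %| (b1 + m1 * a) - (b2 + m2 * a))%Z -> b1 = b2 /\ m1 = m2.
Proof.
move=> b1h b2h m1D m2D /dvdzP[q e].
have [a1 [h_gt0 D_gt0 ah Dh [u [v uv]]]] := gcdz_cofactors.
have b12 : b1 = b2.
  apply/eqP; rewrite -subr_eq0; apply/eqP/(dvdz_small (h := h)); last by lia.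
  apply/dvdzP; exists (q * D - (m1 - m2) * a1).
  by rewrite mulrBl -mulrA -Dh -e -mulrA -ah; ring.
split=> //; have m12 : (m1 - m2) * a1 = q * D.
  apply: (mulIf (lt0r_neq0 h_gt0)); rewrite -!mulrA -ah -Dh -e b12; ring.
apply/eqP; rewrite -subr_eq0; apply/eqP/(dvdz_small (h := D)); last by lia.
apply/dvdzP; exists (u * q + v * (m1 - m2)).
rewrite -[LHS]mulr1 -uv.
by transitivity (u * ((m1 - m2) * a1) + v * D * (m1 - m2)); [ring|rewrite m12; ring].
Qed.

Lemma rep_residue_exists (y : int) : exists b m t,
  [/\ 1 <= b <= h, 1 <= m <= D & y = b + m * a + t * (d - a)].
Proof.
have [a1 [h_gt0 D_gt0 ah Dh [u [v uv]]]] := gcdz_cofactors.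
have mod_range (z n : int) : 0 < n -> 1 <= ((z - 1) %% n)%Z + 1 <= n.
  move=> n_gt0; have := modz_ge0 (z - 1) (lt0r_neq0 n_gt0).
  by have := ltz_mod (z - 1) (lt0r_neq0 n_gt0); rewrite gtr0_norm //; lia.
have modE (z n : int) : z = ((z - 1) %/ n)%Z * n + (((z - 1) %% n)%Z + 1).
  by rewrite addrA -divz_eq subrK.
set k := ((y - 1) %/ h)%Z; set b := ((y - 1) %% h)%Z + 1.
set j := ((k * u - 1) %/ D)%Z; set m := ((k * u - 1) %% D)%Z + 1.
exists b, m, (k * v + j * a1); split; rewrite ?mod_range //.
rewrite {1}(modE y h) -/k -/b Dh ah (_ : m = k * u - j * D).
  by rewrite -[k in LHS]mulr1 -uv; ring.
by apply: (addrI (j * D)); rewrite -modE addrC subrK.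
Qed.

End NormalForm.

Lemma sl2_conj_upper (a x d a' x' d' : int) (g : 'M[int]_2) : \det g = 1 ->
  mx2 a x 0 d *m g = g *m mx2 a' x' 0 d' -> d != a' ->
  [/\ a = a', d = d' & (d - a %| x - x')%Z].
Proof.
rewrite (mx2_eta g) det_mx2 !mul_mx2.
set p := g 0 0; set q := g 0 1; set r := g 1 0; set t := g 1 1.
move=> det_g /mx2_inj[e00 e01 e10 e11] da'.
have r0 : r = 0.
  have : r * (d - a') = (0 * p + d * r) - (r * a' + t * 0) by ring.
  by rewrite e10 subrr => /eqP; rewrite mulf_eq0 subr_eq0 (negbTE da') orbF => /eqP.
rewrite r0 !(mulr0, mul0r, subr0, addr0, add0r) in det_g e00 e01 e11.
have pp : p * p = 1 by have [] := sign_cases det_g => ->.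
have tp : t = p by rewrite -[t]mul1r -pp -mulrA det_g mulr1.
have p0 : p != 0 by apply: contra_eq_neq pp => ->; rewrite mul0r eq_sym oner_neq0.
have aa' : a = a' by apply: (mulIf p0); rewrite e00 mulrC.
have dd' : d = d' by apply: (mulIf p0); rewrite -tp e11 mulrC.
split=> //; apply/dvdzP; exists (p * q).
rewrite -[x - x']mul1r -pp -!mulrA; congr (p * _).
transitivity (a * q + x * t - p * x' - q * a); first by rewrite tp; ring.
by rewrite e01 -dd'; ring.
Qed.

Lemma rep_inM_hyperbolic_cusp (n : nat) (R : 'M[int]_2) :
  is_rep n R -> [/\ inM n R, hyperbolic R & cusp_fixed R].
Proof.
move=> [a [d [b [m [s [a_gt0 a_lt_d ad_n s1 [bh bh1 mD ->]]]]]]].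
have ss : s * s = 1 by case: s1 => ->.
have s0 : s != 0 by case: s1 => ->.
have [hyp cusp] : hyperbolic (mx2 (s * a) (s * (b + m * a)) 0 (s * d)) /\
    cusp_fixed (mx2 (s * a) (s * (b + m * a)) 0 (s * d)).
  by apply: upper_hyperbolic_cusp; rewrite (inj_eq (mulfI s0)) lt_eqF.
rewrite scale_mx2 mulr0; split=> //; split; last first.
  by rewrite -(mulr0 s) -scale_mx2; apply/content_upper_eq1.
by rewrite det_mx2 mulr0 subr0 mulrACA ss mul1r.
Qed.

Lemma rep_sl2_conj_eq (n : nat) (R1 R2 : 'M[int]_2) :
  is_rep n R1 -> is_rep n R2 -> sl2_conj R1 R2 -> R1 = R2.
Proof.
move=> [a1 [d1 [b1 [m1 [s1 [a1_gt0 a1_lt_d1 _ s1E [b1h _ m1D ->]]]]]]].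
move=> [a2 [d2 [b2 [m2 [s2 [a2_gt0 a2_lt_d2 _ s2E [b2h _ m2D ->]]]]]]].
move=> /sl2_conjP[g det_g conj_g].
have := sl2_conj_tr det_g conj_g; rewrite !scale_mx2 !tr_mx2 => tr_eq.
have s12 : s1 = s2 by case: s1E tr_eq => ->; case: s2E => -> //; lia.
have ss : s1 * s1 = 1 by case: s1E => ->.
have tr12 : a1 + d1 = a2 + d2 by case: s1E tr_eq; rewrite -s12 => ->; lia.
move: conj_g; rewrite -s12 -scalemxAl -scalemxAr => /(congr1 ( *:%R s1)).
rewrite !scalerA ss !scale1r => conj_g.
have d1a2 : d1 != a2 by apply/eqP => d1a2; lia.
have [a12 d12 dvd_x] := sl2_conj_upper det_g conj_g d1a2; subst a2 d2 s2.
by have [-> ->] := rep_residue_uniq a1_gt0 a1_lt_d1 b1h b2h m1D m2D dvd_x.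
Qed.

Lemma upper_sl2_conj_rep (n : nat) (M g : 'M[int]_2) (s L y mu : int) :
  \det g = 1 -> M *m g = g *m mx2 L y 0 mu -> content M = 1 ->
  s * s = 1 -> 0 < s * L -> s * L < s * mu -> L * mu = n%:Z ^+ 2 ->
  exists R, is_rep n R /\ sl2_conj M R.
Proof.
move=> det_g conj_g cM ss a_gt0 a_lt_d Lmu.
set a := s * L in a_gt0 a_lt_d; set d := s * mu in a_lt_d.
have [b [m [t [bh mD yE]]]] := rep_residue_exists a_gt0 a_lt_d (s * y).
set R := s *: mx2 a (b + m * a) 0 d; set T := mx2 1 t 0 1.
have conj_gT : M *m (g *m T) = (g *m T) *m R.
  rewrite mulmxA conj_g -!mulmxA; congr (g *m _).
  have -> : mx2 L y 0 mu = s *: mx2 a (s * y) 0 d.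
    by rewrite scale_mx2 /a /d !mulrA ss !mul1r mulr0.
  by rewrite -scalemxAl -scalemxAr yE mx2_upper_shift.
have det_gT : \det (g *m T) = 1.
  by rewrite det_mulmx det_g det_mx2 mulr1 mulr0 subr0 mul1r.
exists R; split; last by apply/sl2_conjP; exists (g *m T).
exists a, d, b, m, s; split=> //.
- by rewrite /a /d mulrACA ss mul1r.
- by have [] := sign_cases ss => ->; [left|right].
split=> //; apply/(content_upper_eq1 _ _ _ _ ss).
exact: sl2_conj_content1 det_gT conj_gT cM.
Qed.

Lemma sign_normalize (L mu : int) : 0 < L * mu -> L != mu ->
  exists s, s * s = 1 /\ (0 < s * L < s * mu \/ 0 < s * mu < s * L).
Proof.
move=> Lmu_gt0 L_mu; have [L_gt0|L_lt0|L0] := ltrgtP 0 L.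
- by exists 1; split=> //; rewrite !mul1r; nia.
- by exists (-1); split=> //; rewrite !mulN1r; nia.
by rewrite -L0 mul0r in Lmu_gt0.
Qed.

Lemma hyperbolic_cusp_sl2_conj_rep (n : nat) (M : 'M[int]_2) : (0 < n)%N ->
  inM n M -> hyperbolic M -> cusp_fixed M -> exists R, is_rep n R /\ sl2_conj M R.
Proof.
move=> n_gt0 [detM cM] /hyperbolic_distinct_eigenvalues.
move=> [v [w [al [be [v0 Mv w0 Mw al_be]]]]] cusp.
have [gv [Lv [yv [muv [det_gv conj_gv alL]]]]] :=
  rational_eigenvector_triangularize (cusp v (conj v0 (ex_intro _ al Mv))) v0 Mv.
have [gw [Lw [yw [muw [det_gw conj_gw beL]]]]] :=
  rational_eigenvector_triangularize (cusp w (conj w0 (ex_intro _ be Mw))) w0 Mw.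
have LvLw : Lv != Lw by move: al_be; rewrite alL beL eqr_int.
have := sl2_conj_tr det_gv conj_gv; rewrite (sl2_conj_tr det_gw conj_gw) !tr_mx2 => tr.
have := sl2_conj_det det_gv conj_gv.
rewrite (sl2_conj_det det_gw conj_gw) !det_mx2 !mulr0 !subr0 => det.
have [muvE muwE] := triangular_diag_swap LvLw (esym tr) (esym det).
have Lmu : Lv * muv = n%:Z ^+ 2.
  by rewrite -detM (sl2_conj_det det_gv conj_gv) det_mx2 mulr0 subr0.
have Lv_muv : Lv != muv by rewrite muvE.
have Lmu_gt0 : 0 < Lv * muv by rewrite Lmu exprn_gt0 ?ltz_nat.
have [s [ss [/andP[L_gt0 L_lt_mu]|/andP[mu_gt0 mu_lt_L]]]] := sign_normalize Lmu_gt0 Lv_muv.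
  exact: upper_sl2_conj_rep det_gv conj_gv cM ss L_gt0 L_lt_mu Lmu.
have Lw_gt0 : 0 < s * Lw by rewrite -muvE.
have Lw_lt_mu : s * Lw < s * muw by rewrite -muvE muwE.
have Lwmu : Lw * muw = n%:Z ^+ 2 by rewrite -muvE muwE mulrC.
exact: upper_sl2_conj_rep det_gw conj_gw cM ss Lw_gt0 Lw_lt_mu Lwmu.
Qed.

Theorem lemma9 (n : nat) (hn : (0 < n)%N) :
  (forall R, is_rep n R -> [/\ inM n R, hyperbolic R & cusp_fixed R]) /\
  (forall M, inM n M -> hyperbolic M -> cusp_fixed M ->
     exists R, is_rep n R /\ sl2_conj M R) /\
  (forall R1 R2, is_rep n R1 -> is_rep n R2 -> sl2_conj R1 R2 -> R1 = R2).
Proof.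
split; first exact: rep_inM_hyperbolic_cusp.
split; first by move=> M; apply: hyperbolic_cusp_sl2_conj_rep.
exact: rep_sl2_conj_eq.
Qed.
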